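(* Let $G_1$ and $G_2$ be graphs (each with at least two vertices) such that $\lambda(G_1)=-\iota(G_1)$ and $\lambda(G_2)=-\iota(G_2)$. Then $\lambda(G_1\Box G_2)=-\iota(G_1\Box G_2)$.
   Context: All graphs are finite and simple; $\lambda(G)$ denotes the smallest eigenvalue of the adjacency matrix of $G$. The average degree of a graph $T$ is $\overline{d}(T)=2|E(T)|/|V(T)|$, and $\iota(G)=\max\{\overline{d}(H): H \text{ an induced bipartite subgraph of } G\}$. The Cartesian product $G_1\Box G_2$ has vertex set $V(G_1)\times V(G_2)$, with $(v_1,w_1)$ adjacent to $(v_2,w_2)$ iff either $v_1=v_2$ and $\{w_1,w_2\}\in E(G_2)$, or $w_1=w_2$ and $\{v_1,v_2\}\in E(G_1)$. *)

From HB Require Import structures.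
From mathcomp Require Import all_boot all_order all_algebra.
From mathcomp Require Import reals.
Set Implicit Arguments. Unset Strict Implicit. Unset Printing Implicit Defensive.
Import Order.TTheory GRing.Theory Num.Theory.
Local Open Scope ring_scope.

Definition simple_graph (T : finType) (e : rel T) : Prop :=
  symmetric e /\ irreflexive e.

Definition adjmx (R : nzRingType) (T : finType) (e : rel T) : 'M[R]_#|T| :=
  \matrix_(i, j) (e (enum_val i) (enum_val j))%:R.

Definition is_smallest_eigenvalue (R : realType) (T : finType) (e : rel T)
    (l : R) : Prop :=
  eigenvalue (adjmx R e) l /\
  (forall m : R, eigenvalue (adjmx R e) m -> l <= m).

Definition induced_bipartite (T : finType) (e : rel T) (S : {set T}) : bool :=
  [exists A : {set T}, (A \subset S) &&
     [forall x in S, forall y in S,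
        e x y ==> ((x \in A) != (y \in A))]].

Definition induced_edges (T : finType) (e : rel T) (S : {set T}) : {set {set T}} :=
  [set E : {set T} | [exists x in S, exists y in S, e x y && (E == [set x; y])]].

Definition avg_degree (R : numFieldType) (T : finType) (e : rel T) (S : {set T}) : R :=
  (2 * #|induced_edges e S|)%:R / #|S|%:R.

(* iota(G): max average degree over (nonempty) induced bipartite subgraphs.
   The 0 default is harmless: singletons are bipartite with average degree 0. *)
Definition iota_graph (R : realType) (T : finType) (e : rel T) : R :=
  \big[Num.max/0]_(S : {set T} | (S != set0) && induced_bipartite e S) @avg_degree R T e S.

Definition cart_rel (T1 T2 : finType) (e1 : rel T1) (e2 : rel T2) : rel (T1 * T2) :=
  fun v w => ((v.1 == w.1) && e2 v.2 w.2) || ((v.2 == w.2) && e1 v.1 w.1).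

From mathcomp Require Import all_boot all_order all_algebra.
From mathcomp Require Import reals.
From mathcomp Require Import sesquilinear spectral.
From mathcomp.real_closed Require Import complex.
From mathcomp.algebra_tactics Require Import ring.
Set Implicit Arguments. Unset Strict Implicit. Unset Printing Implicit Defensive.
Import Order.TTheory GRing.Theory Num.Theory.
Local Open Scope ring_scope.

(* By the Rayleigh principle, l bounds the adjacency spectrum of G from below
   iff l |x|^2 <= x A x^T for every vector x.  Evaluating the form at the
   +-1 vector of a bipartition of an induced bipartite subgraph H gives
   lambda(G) <= - avg_degree(H), hence lambda(G) <= - iota(G).
   On G1 [] G2 the form splits into the forms of G2 on the rows and of G1 on
   the columns, so lambda(G1) + lambda(G2) is a lower bound, attained by the
   tensor product of eigenvectors.  Products of induced bipartite subgraphs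
   are induced bipartite with additive average degree, so
   iota(G1) + iota(G2) <= iota(G1 [] G2) <= - lambda(G1 [] G2)
     = - lambda(G1) - lambda(G2) = iota(G1) + iota(G2). *)

Section RayleighBound.
Local Open Scope sesquilinear_scope.

Lemma eigenvalue_spectral_diag (C : numClosedFieldType) n (A : 'M[C]_n) i :
  A \is normalmx -> eigenvalue A (spectral_diag A 0 i).
Proof.
move=> /orthomx_spectralP eA; have Uu := spectral_unit A.
apply/eigenvalueP; exists ('e_i *m spectralmx A).
  by rewrite {2}eA !mulmxA mulmxK // -[_ *m diag_mx _]rowE row_diag_mx -scalemxAl.
apply/negP => /eqP /(congr1 (mulmx^~ (invmx (spectralmx A)))) /=.
rewrite mulmxK // mul0mx => /matrixP /(_ 0 i); rewrite !mxE !eqxx /=.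
by move/eqP; rewrite oner_eq0.
Qed.

Lemma hermitian_form_ge (C : numClosedFieldType) n (A : 'M[C]_n) (l : C) :
  A \is hermsymmx -> (forall i, l <= spectral_diag A 0 i) ->
  forall x : 'rV_n, l * (x *m x^t*) 0 0 <= (x *m A *m x^t*) 0 0.
Proof.
move=> Ah Hl x.
have /hermitian_normalmx /orthomx_spectralP eA := Ah.
have Uu : spectralmx A \is unitarymx := spectral_unitarymx A.
move: eA Hl Uu; set U := spectralmx A; set d := spectral_diag A => eA Hl Uu.
rewrite invmx_unitary // in eA.
set y := x *m U^t*.
have Ey : y^t* = U *m x^t* by rewrite /y trmx_mul map_mxM trmxCK.
have -> : x *m A *m x^t* = y *m diag_mx d *m y^t* by rewrite Ey eA /y !mulmxA.
have -> : x *m x^t* = y *m y^t* by rewrite Ey /y mulmxA mulmxKtV.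
rewrite !mxE mulr_sumr; apply: ler_sum => i _.
rewrite mul_mx_diag !mxE -[X in _ <= X]mulrA [X in _ <= X]mulrCA.
by apply: ler_wpM2r; [rewrite mul_conjC_ge0 | exact: Hl].
Qed.

(* Reduced to the hermitian case over R[i], where eigenvalues are real. *)
Lemma symmetric_form_ge (R : rcfType) n (M : 'M[R]_n) (l : R) : M^T = M ->
  (forall m, eigenvalue M m -> l <= m) ->
  forall v : 'rV[R]_n, l * (v *m v^T) 0 0 <= (v *m M *m v^T) 0 0.
Proof.
move=> Msym Hl v.
pose f := real_complex R; pose MC := map_mx f M.
have conj_f r : Num.conj (f r) = f r.
  by apply/eqP; rewrite eq_complex /= oppr0 !eqxx.
have MCh : MC \is hermsymmx.
  rewrite qualifE /=; apply/eqP/matrixP => i j.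
  rewrite !mxE expr0 mul1r conj_f.
  by have /matrixP/(_ j i) := Msym; rewrite mxE => ->.
have Hd i : f l <= spectral_diag MC 0 i.
  set d := spectral_diag MC 0 i.
  have dE : d = f (complex.Re d).
    by rewrite /f RRe_real // (mxOverP (hermitian_spectral_diag_real MCh)).
  have : eigenvalue M (complex.Re d).
    move: (eigenvalue_spectral_diag i (hermitian_normalmx MCh)).
    rewrite -/d !eigenvalue_root_char {1}dE /MC -map_char_poly.
    by rewrite fmorph_root.
  by move/Hl; rewrite dE lecR.
have := hermitian_form_ge MCh Hd (map_mx f v).
have -> : (map_mx f v)^t* = map_mx f v^T by apply/matrixP => a b; rewrite !mxE conj_f.
by rewrite -!map_mxM !mxE -rmorphM /= lecR.
Qed.

End RayleighBound.

Section AdjacencyForm.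
Variables (R : rcfType) (T : finType) (e : rel T).

Definition adj_form (x : T -> R) := \sum_u \sum_w (e u w)%:R * x u * x w.
Definition sqnorm (x : T -> R) := \sum_u x u ^+ 2.

(* MathComp eigenvectors are row vectors, [v *m A = m *: v]. *)
Definition adj_eigenfun (m : R) (x : T -> R) :=
  forall w, \sum_u x u * (e u w)%:R = m * x w.

Definition fun_row (x : T -> R) : 'rV[R]_#|T| := \row_i x (enum_val i).

Lemma sum_enum_val (F : T -> R) : \sum_(i < #|T|) F (enum_val i) = \sum_t F t.
Proof. by rewrite -(big_enum_val F); apply: eq_bigl. Qed.

Lemma eigenvalue_adj_eigenfun m : eigenvalue (adjmx R e) m ->
  exists2 x, adj_eigenfun m x & exists t, x t != 0.
Proof.
move/eigenvalueP => [v Hv vn0].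
exists (fun t => v 0 (enum_rank t)).
  move=> w; have /matrixP/(_ 0 (enum_rank w)) := Hv.
  rewrite !mxE => <-; rewrite -sum_enum_val; apply: eq_bigr => i _.
  by rewrite mxE !enum_rankK enum_valK.
have [i vi] : exists i, v 0 i != 0.
  apply/existsP; apply: contraNT vn0; rewrite negb_exists => /forallP H.
  by apply/eqP/matrixP => a b; rewrite ord1 mxE; apply/eqP; have := H b; rewrite negbK.
by exists (enum_val i); rewrite enum_valK.
Qed.

Lemma adj_eigenfun_eigenvalue m x t :
  adj_eigenfun m x -> x t != 0 -> eigenvalue (adjmx R e) m.
Proof.
move=> Hx xt; apply/eigenvalueP; exists (fun_row x).
  apply/matrixP => a j; rewrite !mxE -Hx -sum_enum_val; apply: eq_bigr => i _.
  by rewrite !mxE.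
apply: contra xt => /eqP/matrixP/(_ 0 (enum_rank t)); rewrite !mxE enum_rankK.
by move=> ->.
Qed.

Lemma sqnorm_fun_row x : (fun_row x *m (fun_row x)^T) 0 0 = sqnorm x.
Proof.
rewrite mxE /sqnorm -sum_enum_val; apply: eq_bigr => i _; by rewrite !mxE expr2.
Qed.

Lemma adj_form_fun_row x :
  (fun_row x *m adjmx R e *m (fun_row x)^T) 0 0 = adj_form x.
Proof.
rewrite mxE /adj_form exchange_big -sum_enum_val; apply: eq_bigr => j _.
rewrite !mxE mulr_suml -sum_enum_val; apply: eq_bigr => i _.
by rewrite !mxE [x _ * _]mulrC.
Qed.

Lemma adj_form_ge l : symmetric e ->
  (forall m, eigenvalue (adjmx R e) m -> l <= m) ->
  forall x, l * sqnorm x <= adj_form x.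
Proof.
move=> es Hl x; rewrite -sqnorm_fun_row -adj_form_fun_row.
by apply: symmetric_form_ge => //; apply/matrixP => i j; rewrite !mxE es.
Qed.

Lemma adj_form_eigenfun m x : adj_eigenfun m x -> adj_form x = m * sqnorm x.
Proof.
move=> Hx; rewrite /adj_form exchange_big /sqnorm mulr_sumr.
apply: eq_bigr => w _; rewrite expr2 mulrA -Hx mulr_suml.
by apply: eq_bigr => u _; rewrite [_ * x u]mulrC.
Qed.

Lemma sqnorm_gt0 x t : x t != 0 -> 0 < sqnorm x.
Proof.
move=> xt; rewrite /sqnorm (bigD1 t) //=; apply: ltr_pwDl.
  by rewrite lt0r sqrf_eq0 xt sqr_ge0.
by apply: sumr_ge0 => i _; rewrite sqr_ge0.
Qed.

Lemma eq_adj_form (x y : T -> R) : x =1 y -> adj_form x = adj_form y.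
Proof. by move=> h; apply: eq_bigr => u _; apply: eq_bigr => w _; rewrite !h. Qed.

Lemma adj_formZ (c : R) (x : T -> R) :
  adj_form (fun t => c * x t) = c ^+ 2 * adj_form x.
Proof.
rewrite /adj_form mulr_sumr; apply: eq_bigr => u _; rewrite mulr_sumr.
by apply: eq_bigr => w _; ring.
Qed.

End AdjacencyForm.

Lemma is_smallest_eigenvalue_form (R : realType) (T : finType) (e : rel T) l :
  eigenvalue (adjmx R e) l -> (forall x, l * sqnorm x <= adj_form e x) ->
  is_smallest_eigenvalue e l.
Proof.
move=> ev lb; split=> // m /eigenvalue_adj_eigenfun [x hx [t nt]].
by have := lb x; rewrite (adj_form_eigenfun hx) ler_pM2r // (sqnorm_gt0 nt).
Qed.

Lemma set2_eq_pair (A : finType) (x y a b : A) : x != y ->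
  ([set a; b] == [set x; y]) = ((a, b) \in [set (x, y); (y, x)]).
Proof.
move=> xy; rewrite !inE !xpair_eqE; apply/eqP/idP => [/setP E|]; last first.
  by case/orP => /andP[/eqP-> /eqP->]; rewrite // setUC.
have := E x; rewrite !inE eqxx /= => xab.
have := E y; rewrite !inE eqxx orbT => yab.
have := E a; rewrite !inE eqxx /= => /esym aab.
have yx : y != x by rewrite eq_sym.
by case/orP: aab => /eqP ?; subst a; rewrite eqxx ?(negbTE xy) ?(negbTE yx) /= in xab yab *;
  rewrite ?orbF eq_sym.
Qed.

Section InducedBipartite.
Variables (R : realType) (T : finType) (e : rel T).
Hypotheses (es : symmetric e) (ei : irreflexive e).

Definition indicator (S : {set T}) : T -> R := fun t => (t \in S)%:R.

Definition arc_count (S : {set T}) :=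
  #|[set p : T * T | [&& p.1 \in S, p.2 \in S & e p.1 p.2]]|.

Lemma sum_indicator S : \sum_t indicator S t = #|S|%:R.
Proof.
rewrite /indicator -natr_sum -sum1_card [in RHS]big_mkcond /=.
by congr (_ %:R); apply: eq_bigr => t _; case: (t \in S).
Qed.

Lemma indicator_sqr S t : indicator S t ^+ 2 = indicator S t.
Proof. by rewrite /indicator; case: (t \in S); rewrite ?expr2 ?mulr1 ?mul0r. Qed.

Lemma adj_form_indicator S : adj_form e (indicator S) = (arc_count S)%:R.
Proof.
transitivity (\sum_u \sum_w ([&& u \in S, w \in S & e u w] : nat)%:R : R).
  apply: eq_bigr => u _; apply: eq_bigr => w _; rewrite /indicator -!natrM.
  by case: (e u w); case: (u \in S); case: (w \in S).
rewrite pair_big /= -natr_sum /arc_count -sum1_card.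
congr (_ %:R); rewrite [RHS]big_mkcond; apply: eq_bigr => p _; rewrite inE.
by case: [&& _, _ & _].
Qed.


Lemma arc_count_induced_edges S : arc_count S = (2 * #|induced_edges e S|)%N.
Proof.
rewrite mulnC /arc_count -sum1_card.
rewrite (partition_big (fun p : T * T => [set p.1; p.2]) (mem (induced_edges e S))) /=;
  last first.
  move=> [a b]; rewrite inE /= => /and3P [aS bS eab]; rewrite inE.
  by apply/existsP; exists a; rewrite aS; apply/existsP; exists b; rewrite bS eab eqxx.
rewrite -sum_nat_const; apply: eq_bigr => E.
rewrite inE => /existsP [x /andP [xS /existsP [y /and3P [yS exy /eqP ->]]]].
have xy : x != y by apply: contraTneq exy => ->; rewrite ei.
rewrite (eq_bigl (mem [set (x, y); (y, x)])) => [|[a b]].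
  by rewrite sum1_card cards2 xpair_eqE negb_and xy.
rewrite inE /= set2_eq_pair //; apply/andP/idP => [[] //|pxy]; split=> //.
by move: pxy; rewrite !inE !xpair_eqE => /orP[]/andP[/eqP-> /eqP->]; rewrite xS yS // es.
Qed.

Lemma avg_degree_arc_count S : avg_degree R e S = (arc_count S)%:R / #|S|%:R.
Proof. by rewrite arc_count_induced_edges. Qed.

(* The test vector is +1 on A, -1 on S \ A and 0 elsewhere: every edge of the
   bipartite G[S] contributes -1 to the form. *)
Lemma avg_degree_le_form_lb l S : (forall x, l * sqnorm x <= adj_form e x) ->
  S != set0 -> induced_bipartite e S -> avg_degree R e S <= - l.
Proof.
move=> lb Sn0 /existsP [A /andP [AS /forallP bipA]].
pose x t : R := if t \in S then (if t \in A then 1 else -1) else 0.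
have sqnorm_x : sqnorm x = #|S|%:R.
  rewrite -sum_indicator /sqnorm; apply: eq_bigr => t _; rewrite /x /indicator.
  by case: (t \in S); case: (t \in A); rewrite ?expr2 ?mulrNN ?mulr1 ?mul0r.
have adj_form_x : adj_form e x = - adj_form e (indicator S).
  rewrite /adj_form -sumrN; apply: eq_bigr => u _; rewrite -sumrN.
  apply: eq_bigr => w _; rewrite /x /indicator.
  case uS: (u \in S); case wS: (w \in S); rewrite ?mulr0 ?mul0r ?oppr0 //.
  case euw: (e u w); last by rewrite !mul0r oppr0.
  have := bipA u; rewrite uS /= => /forallP /(_ w); rewrite wS euw /=.
  by case: (u \in A); case: (w \in A); rewrite //= ?mulr1 ?mulrN1 ?opprK ?mulN1r.
have := lb x; rewrite sqnorm_x adj_form_x adj_form_indicator lerNr => le_arcs.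
by rewrite avg_degree_arc_count ler_pdivrMr ?ltr0n ?card_gt0 // mulNr.
Qed.

Lemma avg_degree_ge0 S : 0 <= avg_degree R e S.
Proof. by rewrite /avg_degree divr_ge0 ?ler0n. Qed.

Lemma iota_graph_ge0 : 0 <= iota_graph R e.
Proof. exact: bigmax_ge_id. Qed.

Lemma iota_graph_le_form_lb l : (forall x, l * sqnorm x <= adj_form e x) ->
  0 <= - l -> iota_graph R e <= - l.
Proof.
move=> lb l_le0; apply: bigmax_le => // S /andP [Sn0 Sbip].
exact: avg_degree_le_form_lb.
Qed.

Lemma le_iota_graph S : S != set0 -> induced_bipartite e S ->
  avg_degree R e S <= iota_graph R e.
Proof.
move=> Sn0 Sbip.
by apply: (le_bigmax_cond _ (fun S => avg_degree R e S)); rewrite Sn0 Sbip.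
Qed.

Lemma iota_graph_attained (t0 : T) : exists S, [/\ S != set0,
  induced_bipartite e S & iota_graph R e = avg_degree R e S].
Proof.
have t0_bip : ([set t0] != set0) && induced_bipartite e [set t0].
  rewrite -card_gt0 cards1 /=; apply/existsP; exists set0; rewrite sub0set /=.
  apply/forallP => u; apply/implyP; rewrite inE => /eqP ->.
  by apply/forallP => w; apply/implyP; rewrite inE => /eqP ->; rewrite ei.
rewrite /iota_graph (bigmax_eq_arg 0 [set t0] _ (fun S => avg_degree R e S) t0_bip);
  last by move=> S _; apply: avg_degree_ge0.
by case: arg_maxP => // S /andP [Sn0 Sbip] _; exists S.
Qed.

End InducedBipartite.

Lemma sum_pair (V : nmodType) (T1 T2 : finType) (F : T1 * T2 -> V) :
  \sum_p F p = \sum_a \sum_b F (a, b).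
Proof. by rewrite pair_bigA; apply: eq_bigr => [[a b]]. Qed.

Lemma sum_delta_mul (R : pzSemiRingType) (I : finType) (i : I) (G : I -> R) :
  \sum_j (i == j)%:R * G j = G i.
Proof.
rewrite (bigD1 i) //= eqxx mul1r big1 ?addr0 // => j /negbTE.
by rewrite eq_sym => ->; rewrite mul0r.
Qed.

Section CartesianProduct.
Variables (T1 T2 : finType) (e1 : rel T1) (e2 : rel T2).
Hypotheses (es1 : symmetric e1) (ei1 : irreflexive e1).
Hypotheses (es2 : symmetric e2) (ei2 : irreflexive e2).
Local Notation e12 := (cart_rel e1 e2).

Lemma cart_rel_sym : symmetric e12.
Proof. by move=> [a b] [c d]; rewrite /cart_rel /= es1 es2 (eq_sym a) (eq_sym b). Qed.

Lemma cart_rel_irr : irreflexive e12.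
Proof. by move=> [a b]; rewrite /cart_rel /= ei1 ei2 !andbF. Qed.

(* Vertex (a, b) gets side [(a \in A1) == (b \in A2)]: moving along either
   factor flips exactly one of the two memberships. *)
Lemma induced_bipartite_setX S1 S2 :
  induced_bipartite e1 S1 -> induced_bipartite e2 S2 ->
  induced_bipartite e12 (setX S1 S2).
Proof.
move=> /existsP [A1 /andP [_ /forallP bip1]] /existsP [A2 /andP [_ /forallP bip2]].
apply/existsP; exists ([set p | (p.1 \in A1) == (p.2 \in A2)] :&: setX S1 S2).
rewrite subsetIr /=.
apply/forallP => [[a b]]; apply/implyP; rewrite in_setX /= => /andP [aS bS].
apply/forallP => [[a' b']]; apply/implyP; rewrite in_setX /= => /andP [aS' bS'].
apply/implyP; rewrite /cart_rel /= !inE /= aS bS aS' bS' /= !andbT.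
case/orP => /andP [/eqP <- ee].
  have := bip2 b; rewrite bS /= => /forallP/(_ b'); rewrite bS' ee /=.
  by case: (a \in A1); case: (b \in A2); case: (b' \in A2).
have := bip1 a; rewrite aS /= => /forallP/(_ a'); rewrite aS' ee /=.
by case: (a \in A1); case: (a' \in A1); case: (b \in A2).
Qed.

Section Forms.
Variable R : rcfType.

Lemma cart_relE a b a' b' : ((e12 (a, b) (a', b'))%:R : R) =
  (a == a')%:R * (e2 b b')%:R + (b == b')%:R * (e1 a a')%:R.
Proof.
rewrite /cart_rel /= -!natrM !mulnb.
case: (eqVneq a a') => [->|]; case: (eqVneq b b') => [->|] /=;
  by rewrite ?ei1 ?ei2 ?orbF ?addr0 ?add0r.
Qed.

Lemma adj_form_cart (x : T1 * T2 -> R) : adj_form e12 x =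
  \sum_a adj_form e2 (fun b => x (a, b)) + \sum_b adj_form e1 (fun a => x (a, b)).
Proof.
rewrite /adj_form sum_pair.
transitivity (\sum_a \sum_b \sum_a' \sum_b'
   ((a == a')%:R * ((e2 b b')%:R * x (a, b) * x (a', b')) +
    (b == b')%:R * ((e1 a a')%:R * x (a, b) * x (a', b'))) : R).
  apply: eq_bigr => a _; apply: eq_bigr => b _; rewrite sum_pair.
  by apply: eq_bigr => a' _; apply: eq_bigr => b' _; rewrite cart_relE; ring.
rewrite [X in _ = _ + X]exchange_big /= -big_split; apply: eq_bigr => a _.
rewrite -big_split; apply: eq_bigr => b _.
under eq_bigr do rewrite big_split /=.
rewrite big_split /=; congr (_ + _).
  by rewrite exchange_big; apply: eq_bigr => b' _; rewrite sum_delta_mul.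
by apply: eq_bigr => a' _; rewrite sum_delta_mul.
Qed.

Lemma adj_form_cart_ge (l1 l2 : R) :
  (forall x, l1 * sqnorm x <= adj_form e1 x) ->
  (forall x, l2 * sqnorm x <= adj_form e2 x) ->
  forall x, (l1 + l2) * sqnorm x <= adj_form e12 x.
Proof.
move=> lb1 lb2 x; rewrite adj_form_cart mulrDl addrC; apply: lerD.
  by rewrite /sqnorm sum_pair mulr_sumr; apply: ler_sum => a _; apply: lb2.
rewrite /sqnorm sum_pair exchange_big mulr_sumr.
by apply: ler_sum => b _; apply: lb1.
Qed.

Lemma adj_eigenfun_cart (m1 m2 : R) (x1 : T1 -> R) (x2 : T2 -> R) :
  adj_eigenfun e1 m1 x1 -> adj_eigenfun e2 m2 x2 ->
  adj_eigenfun e12 (m1 + m2) (fun p => x1 p.1 * x2 p.2).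
Proof.
move=> eig1 eig2 [a b]; rewrite sum_pair /=.
transitivity (\sum_a' \sum_b' ((a == a')%:R * (x1 a' * (x2 b' * (e2 b' b)%:R)) +
   (b == b')%:R * (x2 b' * (x1 a' * (e1 a' a)%:R))) : R).
  apply: eq_bigr => a' _; apply: eq_bigr => b' _.
  by rewrite cart_relE (eq_sym a') (eq_sym b'); ring.
under eq_bigr do rewrite big_split /=.
rewrite big_split /=.
under eq_bigr do rewrite -mulr_sumr -mulr_sumr.
rewrite sum_delta_mul.
under eq_bigr do rewrite sum_delta_mul.
by rewrite -mulr_sumr eig1 eig2; ring.
Qed.

Lemma eigenvalue_cart (m1 m2 : R) :
  eigenvalue (adjmx R e1) m1 -> eigenvalue (adjmx R e2) m2 ->
  eigenvalue (adjmx R e12) (m1 + m2).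
Proof.
move=> /eigenvalue_adj_eigenfun [x1 eig1 [t1 x1t1]].
move=> /eigenvalue_adj_eigenfun [x2 eig2 [t2 x2t2]].
apply: (adj_eigenfun_eigenvalue (t := (t1, t2)) (adj_eigenfun_cart eig1 eig2)).
by rewrite mulf_neq0.
Qed.

End Forms.

Section AverageDegree.
Variable R : realType.

Lemma avg_degree_setX S1 S2 : S1 != set0 -> S2 != set0 ->
  avg_degree R e12 (setX S1 S2) = avg_degree R e1 S1 + avg_degree R e2 S2.
Proof.
move=> S1n0 S2n0.
rewrite (avg_degree_arc_count R cart_rel_sym cart_rel_irr) !avg_degree_arc_count //.
rewrite -!adj_form_indicator cardsX natrM adj_form_cart.
have rows a : adj_form e2 (fun b => indicator R (setX S1 S2) (a, b)) =
    indicator R S1 a * adj_form e2 (indicator R S2).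
  rewrite -[indicator R S1 a]indicator_sqr -adj_formZ; apply: eq_adj_form => b.
  by rewrite /indicator in_setX -natrM mulnb.
have cols b : adj_form e1 (fun a => indicator R (setX S1 S2) (a, b)) =
    indicator R S2 b * adj_form e1 (indicator R S1).
  rewrite -[indicator R S2 b]indicator_sqr -adj_formZ; apply: eq_adj_form => a.
  by rewrite /indicator in_setX -natrM mulnb andbC.
under eq_bigr do rewrite rows.
under [X in _ + X]eq_bigr do rewrite cols.
rewrite -!mulr_suml !sum_indicator.
have c1 : (#|S1|%:R : R) != 0 by rewrite pnatr_eq0 -lt0n card_gt0.
have c2 : (#|S2|%:R : R) != 0 by rewrite pnatr_eq0 -lt0n card_gt0.
by field; rewrite c1 c2.
Qed.

Lemma iota_graph_cart_ge (t1 : T1) (t2 : T2) :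
  iota_graph R e1 + iota_graph R e2 <= iota_graph R e12.
Proof.
have [S1 [S1n0 bip1 ->]] := iota_graph_attained R ei1 t1.
have [S2 [S2n0 bip2 ->]] := iota_graph_attained R ei2 t2.
rewrite -avg_degree_setX //; apply: le_iota_graph; last exact: induced_bipartite_setX.
by rewrite -card_gt0 cardsX muln_gt0 !card_gt0 S1n0.
Qed.

End AverageDegree.
End CartesianProduct.


Theorem proposition3p1 (R : realType) (T1 T2 : finType)
    (e1 : rel T1) (e2 : rel T2) :
  simple_graph e1 -> simple_graph e2 ->
  (1 < #|T1|)%N -> (1 < #|T2|)%N ->
  is_smallest_eigenvalue e1 (- @iota_graph R _ e1) ->
  is_smallest_eigenvalue e2 (- @iota_graph R _ e2) ->
  is_smallest_eigenvalue (cart_rel e1 e2) (- @iota_graph R _ (cart_rel e1 e2)).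
Proof.
move=> [es1 ei1] [es2 ei2] /ltnW/card_gt0P[t1 _] /ltnW/card_gt0P[t2 _].
move=> [ev1 min1] [ev2 min2].
have lb := adj_form_cart_ge ei1 ei2 (adj_form_ge es1 min1) (adj_form_ge es2 min2).
have iota_le : iota_graph R (cart_rel e1 e2) <= iota_graph R e1 + iota_graph R e2.
  have := iota_graph_le_form_lb (cart_rel_sym es1 es2) (cart_rel_irr ei1 ei2) lb.
  by rewrite opprD !opprK; apply; rewrite addr_ge0 ?iota_graph_ge0.
have -> : - iota_graph R (cart_rel e1 e2) = - iota_graph R e1 + - iota_graph R e2.
  by rewrite -opprD; congr (- _); apply/le_anti; rewrite iota_le iota_graph_cart_ge.
by apply: is_smallest_eigenvalue_form => //; apply: eigenvalue_cart.
Qed.
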